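(* Let $X$ be a complex Banach space with $\dim X\geq2$, let $\mathcal{A}\subseteq\mathcal{B}(X)$ be a standard operator algebra, let $r,s$ be nonnegative integers with $r+s\geq1$, and let $A\in\mathcal{A}$ be nonzero. The following are equivalent: (1) $A$ has rank one; (2) for every $B\in\mathcal{A}$, $\sigma_\pi(B^rAB^s)$ is a singleton; (3) for every $B\in\mathcal{A}$ with $\operatorname{rank}(B)\leq2$, $\sigma_\pi(B^rAB^s)$ is a singleton.
   Context: A standard operator algebra on a complex Banach space $X$ is a subalgebra of $\mathcal{B}(X)$ containing all finite rank operators; it need not be closed or unital. The peripheral spectrum of $T\in\mathcal{B}(X)$ is $\sigma_\pi(T)=\{z\in\sigma(T):|z|=r(T)\}$, where $\sigma(T)$ is the spectrum and $r(T)$ the spectral radius. *)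

From Stdlib Require Import Reals.
Open Scope R_scope.

Record C := mkC { Re : R ; Im : R }.
Definition C0 : C := mkC 0 0.
Definition C1 : C := mkC 1 0.
Definition Cadd (a b : C) : C := mkC (Re a + Re b) (Im a + Im b).
Definition Copp (a : C) : C := mkC (- Re a) (- Im a).
Definition Cmul (a b : C) : C :=
  mkC (Re a * Re b - Im a * Im b) (Re a * Im b + Im a * Re b).
Definition Cabs (a : C) : R := sqrt (Re a * Re a + Im a * Im a).

Record CBanach := {
  car :> Type;
  vzero : car;
  vadd : car -> car -> car;
  vopp : car -> car;
  vscal : C -> car -> car;
  vnorm : car -> R;
  vadd_assoc : forall x y z, vadd x (vadd y z) = vadd (vadd x y) z;
  vadd_comm : forall x y, vadd x y = vadd y x;
  vadd_0 : forall x, vadd x vzero = x;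
  vadd_opp : forall x, vadd x (vopp x) = vzero;
  vscal_1 : forall x, vscal C1 x = x;
  vscal_assoc : forall a b x, vscal a (vscal b x) = vscal (Cmul a b) x;
  vscal_addv : forall a x y, vscal a (vadd x y) = vadd (vscal a x) (vscal a y);
  vscal_adds : forall a b x, vscal (Cadd a b) x = vadd (vscal a x) (vscal b x);
  vnorm_nonneg : forall x, 0 <= vnorm x;
  vnorm_eq0 : forall x, vnorm x = 0 -> x = vzero;
  vnorm_scal : forall a x, vnorm (vscal a x) = Cabs a * vnorm x;
  vnorm_triangle : forall x y, vnorm (vadd x y) <= vnorm x + vnorm y;
  vcomplete : forall u : nat -> car,
    (forall eps, 0 < eps -> exists N, forall m n, (N <= m)%nat -> (N <= n)%nat ->
        vnorm (vadd (u m) (vopp (u n))) < eps) ->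
    exists l, forall eps, 0 < eps -> exists N, forall n, (N <= n)%nat ->
        vnorm (vadd (u n) (vopp l)) < eps
}.

Section Ops.
Variable X : CBanach.

Definition dim_ge2 : Prop :=
  exists x y : X, forall a b : C,
    vadd X (vscal X a x) (vscal X b y) = vzero X -> a = C0 /\ b = C0.

Definition op := X -> X.

Definition linear (T : op) : Prop :=
  (forall x y, T (vadd X x y) = vadd X (T x) (T y)) /\
  (forall a x, T (vscal X a x) = vscal X a (T x)).

Definition bounded_op (T : op) : Prop :=
  linear T /\ exists M : R, forall x, vnorm X (T x) <= M * vnorm X x.

Definition op_add (S T : op) : op := fun x => vadd X (S x) (T x).
Definition op_scal (a : C) (T : op) : op := fun x => vscal X a (T x).
Definition op_comp (S T : op) : op := fun x => S (T x).
Definition op_id : op := fun x => x.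
Definition op_pow (T : op) (n : nat) : op := fun x => Nat.iter n T x.

Fixpoint in_span (ys : list X) (v : X) : Prop :=
  match ys with
  | nil => v = vzero X
  | cons y ys' => exists a : C, exists w, in_span ys' w /\ v = vadd X (vscal X a y) w
  end.

Definition rank_le (n : nat) (T : op) : Prop :=
  exists ys : list X, length ys = n /\ forall x, in_span ys (T x).

Definition op_nonzero (T : op) : Prop := exists x, T x <> vzero X.

Definition rank_one (T : op) : Prop := rank_le 1 T /\ op_nonzero T.

Definition finite_rank (T : op) : Prop := bounded_op T /\ exists n, rank_le n T.

(* standard operator algebra: a (not necessarily closed or unital)
   complex subalgebra of B(X) containing all finite rank operators *)
Definition standard_operator_algebra (A : op -> Prop) : Prop :=
  (forall T, A T -> bounded_op T) /\
  (forall S T, A S -> A T -> A (op_add S T)) /\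
  (forall a T, A T -> A (op_scal a T)) /\
  (forall S T, A S -> A T -> A (op_comp S T)) /\
  (forall T, finite_rank T -> A T).

Definition invertible (T : op) : Prop :=
  exists S, bounded_op S /\ (forall x, S (T x) = x) /\ (forall x, T (S x) = x).

Definition spectrum (T : op) (lam : C) : Prop :=
  ~ invertible (fun x => vadd X (vscal X lam x) (vopp X (T x))).

Definition is_spectral_radius (T : op) (rho : R) : Prop :=
  is_lub (fun t => exists lam, spectrum T lam /\ t = Cabs lam) rho.

Definition peripheral_spectrum (T : op) (z : C) : Prop :=
  spectrum T z /\ is_spectral_radius T (Cabs z).

Definition is_singleton (P : C -> Prop) : Prop :=
  exists z, forall w, P w <-> w = z.

End Ops.

(** (1) => (2): if [A] has rank one, every [T = B^r A B^s] has rank at most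
    one, so [T^2 = c T] with [c] a spectral value; the spectrum lies in
    [{0, c}] (annihilating polynomials) and the peripheral spectrum is [{c}].
    (2) => (3) is trivial.
    (3) => (1): if [A] has rank at least two, we find biorthogonal vectors
    [w1, w2] and bounded functionals [h1, h2] compressing [A] to a 2x2 matrix
    with equal diagonal and nonzero determinant [del].  With [om^(r+s) = -1]
    the rank-two operator [B = w1 (x) h1 + om w2 (x) h2] makes
    [T = B^r A B^s] satisfy [T^4 = del T^2] with both square roots of [del]
    as eigenvalues, so the peripheral spectrum has two points. *)

From Pilot Require Import Defs.
From Stdlib Require Import Reals Lra Lia Field List Classical ClassicalEpsilon.
From mathcomp Require boolp classical_sets.
Open Scope R_scope.

Local Notation C := Defs.C.
Local Notation C0 := Defs.C0.
Local Notation C1 := Defs.C1.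
Local Notation linear := Defs.linear.

Lemma C_ext (a b : C) : Re a = Re b -> Im a = Im b -> a = b.
Proof. destruct a, b; simpl; intros; subst; reflexivity. Qed.

Definition Csub (a b : C) : C := Cadd a (Copp b).
Definition Cnorm2 (a : C) : R := Re a * Re a + Im a * Im a.
Definition Cinv (a : C) : C := mkC (Re a / Cnorm2 a) (- Im a / Cnorm2 a).
Definition Cdiv (a b : C) : C := Cmul a (Cinv b).

Lemma C_ring : ring_theory C0 C1 Cadd Cmul Csub Copp (@eq C).
Proof.
  constructor; intros; apply C_ext; destruct x; try destruct y; try destruct z;
    unfold C0, C1, Cadd, Cmul, Csub, Copp; simpl; ring.
Qed.

Lemma Cnorm2_neq0 (a : C) : a <> C0 -> Cnorm2 a <> 0.
Proof.
  intros Ha E; apply Ha; destruct a as [x y]; unfold Cnorm2 in E; simpl in E.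
  assert (x = 0) by nra; assert (y = 0) by nra; subst; reflexivity.
Qed.

Lemma C_field : field_theory C0 C1 Cadd Cmul Csub Copp Cdiv Cinv (@eq C).
Proof.
  constructor.
  - exact C_ring.
  - intro H; injection H; lra.
  - reflexivity.
  - intros [x y] Hp; apply Cnorm2_neq0 in Hp; apply C_ext;
      unfold Cmul, Cinv, C1, Cnorm2 in *; simpl in *; field; auto.
Qed.

Add Field C_field_inst : C_field.

Lemma C1_neq0 : C1 <> C0.
Proof. intro H; injection H; lra. Qed.

Lemma C2_neq0 : Cadd C1 C1 <> C0.
Proof. intro H; injection H; lra. Qed.

Lemma Cmul_eq0 a b : Cmul a b = C0 -> a = C0 \/ b = C0.
Proof.
  intro H; destruct (classic (a = C0)) as [|Ha]; [left; auto | right].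
  replace b with (Cmul (Cinv a) (Cmul a b)) by (field; auto); rewrite H; ring.
Qed.

Lemma Copp_eq_self a : a = Copp a -> a = C0.
Proof.
  intro E; replace a with (Cmul (Cinv (Cadd C1 C1)) (Cadd a a))
    by (field; exact C2_neq0).
  rewrite E at 2; ring.
Qed.

Lemma Cabs_nonneg a : 0 <= Cabs a.
Proof. apply sqrt_pos. Qed.

Lemma Cabs_mul a b : Cabs (Cmul a b) = Cabs a * Cabs b.
Proof.
  unfold Cabs; rewrite <- sqrt_mult_alt by nra; f_equal.
  destruct a, b; simpl; ring.
Qed.

Lemma Cabs_C0 : Cabs C0 = 0.
Proof. unfold Cabs, C0; simpl; replace (0 * 0 + 0 * 0) with 0 by ring; apply sqrt_0. Qed.

Lemma Cabs_eq0 a : Cabs a = 0 -> a = C0.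
Proof.
  intro H; apply sqrt_eq_0 in H; [|nra].
  destruct a as [x y]; simpl in H.
  assert (x = 0) by nra; assert (y = 0) by nra; subst; reflexivity.
Qed.

Lemma Cabs_real t : Cabs (mkC t 0) = Rabs t.
Proof.
  unfold Cabs; simpl; replace (t * t + 0 * 0) with (Rsqr t) by (unfold Rsqr; ring).
  apply sqrt_Rsqr_abs.
Qed.

Lemma Cabs_opp a : Cabs (Copp a) = Cabs a.
Proof. unfold Cabs, Copp; simpl; f_equal; ring. Qed.

Lemma Cdot_le_Cabs x y u v : x * u + y * v <= Cabs (mkC x y) * Cabs (mkC u v).
Proof.
  rewrite <- Cabs_mul; unfold Cabs, Cmul; simpl.
  destruct (Rle_dec (x * u + y * v) 0); [eapply Rle_trans; [eauto | apply sqrt_pos]|].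
  apply Rsqr_incr_0_var; [| apply sqrt_pos]; unfold Rsqr; rewrite sqrt_sqrt by nra.
  pose proof (Rle_0_sqr (x * v - y * u)); unfold Rsqr in *; nra.
Qed.

Lemma Cabs_add a b : Cabs (Cadd a b) <= Cabs a + Cabs b.
Proof.
  assert (Ha := Cabs_nonneg a); assert (Hb := Cabs_nonneg b).
  apply Rsqr_incr_0_var; [| nra]; unfold Rsqr.
  assert (Sq : forall c, Cabs c * Cabs c = Re c * Re c + Im c * Im c)
    by (intro c; apply sqrt_sqrt; nra).
  replace ((Cabs a + Cabs b) * (Cabs a + Cabs b))
    with (Cabs a * Cabs a + Cabs b * Cabs b + 2 * (Cabs a * Cabs b)) by ring.
  rewrite !Sq; destruct a as [x y], b as [u v]; simpl.
  pose proof (Cdot_le_Cabs x y u v); nra.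
Qed.

Lemma Cabs_le_re_im a : Cabs a <= Rabs (Re a) + Rabs (Im a).
Proof.
  destruct a as [x y]; simpl.
  replace (mkC x y) with (Cadd (mkC x 0) (mkC 0 y)) by (apply C_ext; simpl; ring).
  eapply Rle_trans; [apply Cabs_add|]; rewrite Cabs_real.
  replace (mkC 0 y) with (Cmul (mkC 0 1) (mkC y 0)) by (apply C_ext; simpl; ring).
  rewrite Cabs_mul, Cabs_real; unfold Cabs; simpl.
  replace (0 * 0 + 1 * 1) with 1 by ring; rewrite sqrt_1; lra.
Qed.

Lemma Cabs_sq_eq a b : Cmul a a = Cmul b b -> Cabs a = Cabs b.
Proof.
  intro H; assert (E : Cabs a * Cabs a = Cabs b * Cabs b)
    by (rewrite <- !Cabs_mul, H; auto).
  pose proof (Cabs_nonneg a); pose proof (Cabs_nonneg b); nra.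
Qed.

Fixpoint Cpow (a : C) (k : nat) : C :=
  match k with O => C1 | S k => Cmul a (Cpow a k) end.

Lemma Cpow_trig t k :
  Cpow (mkC (cos t) (sin t)) k = mkC (cos (INR k * t)) (sin (INR k * t)).
Proof.
  induction k as [|k IH]; simpl Cpow.
  - rewrite Rmult_0_l, cos_0, sin_0; reflexivity.
  - rewrite IH, S_INR; replace ((INR k + 1) * t) with (t + INR k * t) by ring.
    rewrite cos_plus, sin_plus; apply C_ext; simpl; ring.
Qed.

Lemma Cpow_root_m1 n : (1 <= n)%nat -> exists w, Cpow w n = Copp C1.
Proof.
  intro Hn; exists (mkC (cos (PI / INR n)) (sin (PI / INR n))); rewrite Cpow_trig.
  replace (INR n * (PI / INR n)) with PI by (field; apply not_0_INR; lia).
  rewrite cos_PI, sin_PI; apply C_ext; simpl; ring.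
Qed.

Lemma Csqrt_ex d : exists m, Cmul m m = d.
Proof.
  destruct d as [p q].
  set (m := sqrt (p * p + q * q)).
  assert (Hmm : m * m = p * p + q * q) by (apply sqrt_sqrt; nra).
  assert (Hmp : Rabs p <= m).
  { unfold m; rewrite <- sqrt_Rsqr_abs; apply sqrt_le_1_alt; unfold Rsqr; nra. }
  assert (Hp := Rle_abs p); assert (Hp' := Rle_abs (- p)); rewrite Rabs_Ropp in Hp'.
  set (a := sqrt ((m + p) / 2)); set (b := sqrt ((m - p) / 2)).
  assert (Ha : a * a = (m + p) / 2) by (apply sqrt_sqrt; lra).
  assert (Hb : b * b = (m - p) / 2) by (apply sqrt_sqrt; lra).
  assert (Hab : a * b = Rabs q / 2).
  { unfold a, b; rewrite <- sqrt_mult_alt by lra.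
    replace ((m + p) / 2 * ((m - p) / 2)) with (Rsqr (q / 2))
      by (unfold Rsqr; replace ((m + p) / 2 * ((m - p) / 2))
            with ((m * m - p * p) / 4) by field; rewrite Hmm; field).
    rewrite sqrt_Rsqr_abs; unfold Rdiv; rewrite Rabs_mult, Rabs_inv, (Rabs_right 2); lra. }
  destruct (Rle_dec 0 q) as [Hq|Hq].
  - exists (mkC a b); apply C_ext; simpl.
    + rewrite Ha, Hb; field.
    + rewrite Rabs_right in Hab by lra; lra.
  - exists (mkC a (- b)); apply C_ext; simpl.
    + replace (a * a - - b * - b) with (a * a - b * b) by ring; rewrite Ha, Hb; field.
    + rewrite Rabs_left in Hab by lra; lra.
Qed.

Section Vectors.
Variable X : CBanach.
Local Notation "0v" := (vzero X).
Local Notation "x +v y" := (vadd X x y) (at level 50, left associativity).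
Local Notation "a *v x" := (vscal X a x) (at level 40, left associativity).

Lemma vadd_0l x : 0v +v x = x.
Proof. rewrite vadd_comm; apply vadd_0. Qed.

Lemma vadd_cancel x y z : x +v y = x +v z -> y = z.
Proof.
  intro H; rewrite <- (vadd_0l y), <- (vadd_0l z), <- (vadd_opp X x),
    (vadd_comm X x (vopp X x)), <- !vadd_assoc, H; reflexivity.
Qed.

Lemma vscal_0s x : C0 *v x = 0v.
Proof.
  apply (vadd_cancel (C0 *v x)); rewrite vadd_0, <- vscal_adds.
  f_equal; apply C_ext; simpl; ring.
Qed.

Lemma vscal_0v a : a *v 0v = 0v.
Proof. apply (vadd_cancel (a *v 0v)); rewrite vadd_0, <- vscal_addv, vadd_0; auto. Qed.

Lemma vopp_scal x : vopp X x = Copp C1 *v x.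
Proof.
  apply (vadd_cancel x); rewrite vadd_opp, <- (vscal_1 X x) at 1.
  rewrite <- vscal_adds, <- (vscal_0s x); f_equal; apply C_ext; simpl; ring.
Qed.

Lemma vadd_swap4 a b c d : (a +v b) +v (c +v d) = (a +v c) +v (b +v d).
Proof.
  rewrite <- !vadd_assoc; f_equal; rewrite !vadd_assoc; f_equal; apply vadd_comm.
Qed.

Lemma vsub_eq0 x y : x +v vopp X y = 0v -> x = y.
Proof.
  intro H; rewrite <- (vadd_0 X x), <- (vadd_opp X y), (vadd_comm X y), vadd_assoc, H.
  apply vadd_0l.
Qed.

Lemma vopp_sub x y : vopp X (x +v vopp X y) = y +v vopp X x.
Proof.
  apply (vadd_cancel (x +v vopp X y)); rewrite vadd_opp, (vadd_comm X y), vadd_swap4,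
    vadd_opp, (vadd_comm X (vopp X y)), vadd_opp, vadd_0; reflexivity.
Qed.

Lemma vscal_inj a x y : a <> C0 -> a *v x = a *v y -> x = y.
Proof.
  intros Ha H; rewrite <- (vscal_1 X x), <- (vscal_1 X y).
  replace C1 with (Cmul (Cinv a) a) by (field; auto).
  rewrite <- !vscal_assoc, H; reflexivity.
Qed.

Lemma vscal_eq0 a x : a *v x = 0v -> a = C0 \/ x = 0v.
Proof.
  intro H; destruct (classic (a = C0)) as [|Ha]; [left; auto | right].
  apply (vscal_inj a); rewrite ?vscal_0v; auto.
Qed.

Lemma vnorm_0 : vnorm X 0v = 0.
Proof. rewrite <- (vscal_0s 0v), vnorm_scal, Cabs_C0; ring. Qed.

Lemma vnorm_opp x : vnorm X (vopp X x) = vnorm X x.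
Proof.
  rewrite vopp_scal, vnorm_scal; replace (Copp C1) with (mkC (-1) 0)
    by (apply C_ext; simpl; ring).
  rewrite Cabs_real, Rabs_left by lra; ring.
Qed.

End Vectors.

Section Operators.
Variable X : CBanach.
Local Notation "0v" := (vzero X).
Local Notation "x +v y" := (vadd X x y) (at level 50, left associativity).
Local Notation "a *v x" := (vscal X a x) (at level 40, left associativity).

Lemma lin_0 (T : op X) : linear X T -> T 0v = 0v.
Proof. intros [_ Hs]; rewrite <- (vscal_0s X 0v) at 1; rewrite Hs, vscal_0s; reflexivity. Qed.

Lemma lin_opp (T : op X) x : linear X T -> T (vopp X x) = vopp X (T x).
Proof. intros [_ Hs]; rewrite !vopp_scal, Hs; reflexivity. Qed.

Lemma lin_comb (T : op X) a b x y :
  linear X T -> T (a *v x +v b *v y) = a *v T x +v b *v T y.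
Proof. intros [Ha Hs]; rewrite Ha, !Hs; reflexivity. Qed.

Lemma scal_bounded (S : op X) a : bounded_op X S -> bounded_op X (fun x => a *v S x).
Proof.
  intros [[Sa Ss] [M HM]]; split; [split|].
  - intros; rewrite Sa, vscal_addv; reflexivity.
  - intros; rewrite Ss, !vscal_assoc; f_equal; ring.
  - exists (Cabs a * M); intros; rewrite vnorm_scal, Rmult_assoc.
    apply Rmult_le_compat_l; [apply Cabs_nonneg | apply HM].
Qed.

Lemma add_bounded (S T : op X) :
  bounded_op X S -> bounded_op X T -> bounded_op X (op_add X S T).
Proof.
  intros [[Sa Ss] [M HM]] [[Ta Ts] [N HN]]; split; [split|]; unfold op_add.
  - intros; rewrite Sa, Ta, vadd_swap4; reflexivity.
  - intros; rewrite Ss, Ts, vscal_addv; reflexivity.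
  - exists (Rabs M + Rabs N); intro x; eapply Rle_trans; [apply vnorm_triangle|].
    pose proof (HM x); pose proof (HN x); pose proof (vnorm_nonneg X x).
    pose proof (Rle_abs M); pose proof (Rle_abs N); nra.
Qed.

Lemma comp_bounded (S T : op X) :
  bounded_op X S -> bounded_op X T -> bounded_op X (op_comp X S T).
Proof.
  intros [[Sa Ss] [M HM]] [[Ta Ts] [N HN]]; split; [split|]; unfold op_comp.
  - intros; rewrite Ta, Sa; reflexivity.
  - intros; rewrite Ts, Ss; reflexivity.
  - exists (Rabs M * Rabs N); intro x; eapply Rle_trans; [apply HM|].
    pose proof (vnorm_nonneg X x); pose proof (vnorm_nonneg X (T x)); pose proof (HN x).
    pose proof (Rle_abs M); pose proof (Rle_abs N); pose proof (Rabs_pos M).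
    apply Rle_trans with (Rabs M * vnorm X (T x)); [nra|].
    rewrite Rmult_assoc; apply Rmult_le_compat_l; nra.
Qed.

Lemma id_bounded : bounded_op X (op_id X).
Proof. split; [split|]; unfold op_id; auto; exists 1; intros; lra. Qed.

Lemma pow_bounded (B : op X) n : bounded_op X B -> bounded_op X (op_pow X B n).
Proof.
  intro HB; induction n as [|n IH]; [apply id_bounded|].
  change (op_pow X B (S n)) with (op_comp X B (op_pow X B n)); apply comp_bounded; auto.
Qed.

Lemma eigen_spectrum (T : op X) lam v :
  v <> 0v -> T v = lam *v v -> spectrum X T lam.
Proof.
  intros Hv HTv [S [[[_ Ss] _] [HST _]]]; apply Hv.
  rewrite <- (HST v), HTv, vadd_opp, <- (vscal_0s X 0v) at 1; rewrite Ss, vscal_0s; reflexivity.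
Qed.

End Operators.

(** * Annihilating polynomials and the spectrum

    A polynomial is a list of coefficients, constant term first.  If a
    bounded operator [T] satisfies [p(T) = 0], then every spectral value [lam]
    is a root of [p]: otherwise dividing [p] by [x - lam] produces an explicit
    bounded inverse of [lam - T]. *)

Fixpoint peval (p : list C) (x : C) : C :=
  match p with nil => C0 | a :: p' => Cadd a (Cmul x (peval p' x)) end.

(* Quotient of [p] by [x - lam] (synthetic division). *)
Fixpoint pquo (lam : C) (p : list C) : list C :=
  match p with nil => nil | _ :: p' => peval p' lam :: pquo lam p' end.

Section Annihilator.
Variable X : CBanach.
Local Notation "0v" := (vzero X).
Local Notation "x +v y" := (vadd X x y) (at level 50, left associativity).
Local Notation "a *v x" := (vscal X a x) (at level 40, left associativity).

(* [polyop T p] is the operator [p(T)], evaluated by Horner's rule. *)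
Fixpoint polyop (T : op X) (p : list C) (z : X) : X :=
  match p with nil => 0v | a :: p' => a *v z +v T (polyop T p' z) end.

Variable T : op X.
Hypothesis HT : bounded_op X T.
Let LT : linear X T := proj1 HT.

Lemma polyop_cons0 p z : polyop T (C0 :: p) z = T (polyop T p z).
Proof. simpl; rewrite vscal_0s, vadd_0l; reflexivity. Qed.

Lemma polyop_linear p : linear X (polyop T p).
Proof.
  induction p as [|a p [IHa IHs]]; split; simpl; intros.
  - rewrite vadd_0; reflexivity.
  - rewrite vscal_0v; reflexivity.
  - rewrite IHa, (proj1 LT), vscal_addv, vadd_swap4; reflexivity.
  - rewrite IHs, (proj2 LT), vscal_addv, !vscal_assoc; do 2 f_equal; ring.
Qed.

Lemma polyop_bounded p : bounded_op X (polyop T p).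
Proof.
  split; [apply polyop_linear|]; pose proof HT as [_ [M HM]].
  induction p as [|a p [N HN]]; simpl.
  - exists 0; intro x; rewrite vnorm_0; pose proof (vnorm_nonneg X x); nra.
  - exists (Cabs a + Rabs M * Rabs N); intro x.
    eapply Rle_trans; [apply vnorm_triangle|]; rewrite vnorm_scal.
    pose proof (vnorm_nonneg X x); pose proof (HM (polyop T p x)); pose proof (HN x).
    pose proof (vnorm_nonneg X (polyop T p x)); pose proof (Rle_abs M);
      pose proof (Rle_abs N); pose proof (Rabs_pos M).
    assert (vnorm X (T (polyop T p x)) <= Rabs M * (Rabs N * vnorm X x)).
    { apply Rle_trans with (Rabs M * vnorm X (polyop T p x)); [nra|].
      apply Rmult_le_compat_l; nra. }
    nra.
Qed.

Lemma polyop_shift p z : polyop T p (T z) = T (polyop T p z).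
Proof.
  induction p as [|a p IH]; simpl.
  - symmetry; apply lin_0, LT.
  - rewrite IH, (proj1 LT), (proj2 LT); reflexivity.
Qed.

Lemma polyop_comm p q z : polyop T p (polyop T q z) = polyop T q (polyop T p z).
Proof.
  induction q as [|b q IH]; simpl.
  - apply lin_0, polyop_linear.
  - rewrite (proj1 (polyop_linear p)), (proj2 (polyop_linear p)), polyop_shift, IH.
    reflexivity.
Qed.

Lemma polyop_resolvent lam z :
  polyop T (lam :: Copp C1 :: nil) z = lam *v z +v vopp X (T z).
Proof. simpl; rewrite lin_0, vadd_0, vopp_scal, (proj2 LT) by exact LT; reflexivity. Qed.

Lemma polyop_division p lam z :
  polyop T p z = peval p lam *v z +v polyop T (pquo lam p) (T z +v vopp X (lam *v z)).
Proof.
  induction p as [|a p IH]; simpl.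
  - rewrite vscal_0s, vadd_0; reflexivity.
  - set (c := peval p lam) in *; set (w := T z +v vopp X (lam *v z)).
    set (Q := T (polyop T (pquo lam p) w)).
    rewrite IH, (proj1 LT), (proj2 LT); fold w Q.
    unfold w at 1; rewrite vscal_addv, vscal_adds, vopp_scal, !vscal_assoc.
    assert (H0 : Cmul lam c *v z +v Cmul (Cmul c (Copp C1)) lam *v z = 0v).
    { rewrite <- vscal_adds, <- (vscal_0s X z); f_equal; ring. }
    rewrite (vadd_assoc X (a *v z +v Cmul lam c *v z)), vadd_swap4, H0, vadd_0, vadd_assoc.
    reflexivity.
Qed.

Lemma spectrum_annihilated p lam :
  (forall z, polyop T p z = 0v) -> spectrum X T lam -> peval p lam = C0.
Proof.
  intros Hp Hs; apply NNPP; intro Hd; apply Hs.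
  set (d := peval p lam) in Hd; set (Q := polyop T (pquo lam p)).
  set (L := polyop T (lam :: Copp C1 :: nil)).
  assert (HQL : forall x, Q (L x) = d *v x).
  { intro x; symmetry; apply vsub_eq0.
    rewrite <- (lin_opp _ Q) by apply polyop_linear.
    unfold L; rewrite polyop_resolvent, vopp_sub, <- (Hp x).
    symmetry; apply polyop_division. }
  exists (fun x => Cinv d *v Q x); split; [|split].
  - apply scal_bounded, polyop_bounded.
  - intro x; fold (L x); rewrite <- polyop_resolvent; fold L.
    rewrite HQL, vscal_assoc; replace (Cmul (Cinv d) d) with C1 by (field; auto).
    apply vscal_1.
  - intro x; rewrite <- polyop_resolvent; fold L.
    unfold L, Q; rewrite (proj2 (polyop_linear _)), polyop_comm; fold L Q.
    rewrite HQL, vscal_assoc; replace (Cmul (Cinv d) d) with C1 by (field; auto).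
    apply vscal_1.
Qed.

End Annihilator.

Section Peripheral.
Variable X : CBanach.

Lemma peripheral_singleton (T : op X) c :
  (forall lam, spectrum X T lam -> lam = C0 \/ lam = c) -> spectrum X T c ->
  is_singleton (peripheral_spectrum X T).
Proof.
  intros Hsub Hc.
  assert (Hrad : is_spectral_radius X T (Cabs c)).
  { split.
    - intros t [lam [Hl ->]]; destruct (Hsub lam Hl) as [->| ->]; [|lra].
      rewrite Cabs_C0; apply Cabs_nonneg.
    - intros b Hb; apply Hb; eauto. }
  exists c; intro w; split.
  - intros [Hw [Hub _]]; destruct (Hsub w Hw) as [->|]; auto.
    assert (Cabs c <= Cabs C0) by (apply Hub; eauto).
    rewrite Cabs_C0 in *; pose proof (Cabs_nonneg c).
    symmetry; apply Cabs_eq0; lra.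
  - intros ->; split; auto.
Qed.

Lemma peripheral_not_singleton (T : op X) mu : mu <> C0 ->
  (forall lam, spectrum X T lam -> lam = C0 \/ Cmul lam lam = Cmul mu mu) ->
  spectrum X T mu -> spectrum X T (Copp mu) ->
  ~ is_singleton (peripheral_spectrum X T).
Proof.
  intros Hmu Hsub Hp Hm.
  assert (Hrad : is_spectral_radius X T (Cabs mu)).
  { split.
    - intros t [lam [Hl ->]]; destruct (Hsub lam Hl) as [->|E].
      + rewrite Cabs_C0; apply Cabs_nonneg.
      + right; apply Cabs_sq_eq, E.
    - intros b Hb; apply Hb; eauto. }
  intros [z Hz].
  assert (P1 : peripheral_spectrum X T mu) by (split; auto).
  assert (P2 : peripheral_spectrum X T (Copp mu)) by (split; rewrite ?Cabs_opp; auto).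
  apply Hz in P1; apply Hz in P2; apply Hmu, Copp_eq_self; congruence.
Qed.

End Peripheral.

(** If [T x] always lies on the line spanned by [y], then [T^2 = c T] for a
    scalar [c] (with [T y = c y]); hence [sigma(T)] is contained in [{0, c}]
    and contains [c], so the peripheral spectrum is [{c}]. *)

Section RankOne.
Variable X : CBanach.
Local Notation "0v" := (vzero X).
Local Notation "x +v y" := (vadd X x y) (at level 50, left associativity).
Local Notation "a *v x" := (vscal X a x) (at level 40, left associativity).

Lemma span1_inv y v : in_span X (y :: nil) v -> exists a, v = a *v y.
Proof. intros [a [w [Hw ->]]]; simpl in Hw; subst; exists a; apply vadd_0. Qed.

Lemma span1_map (L : op X) y v :
  linear X L -> in_span X (y :: nil) v -> in_span X (L y :: nil) (L v).
Proof.
  intros HL Hv; destruct (span1_inv _ _ Hv) as [a ->].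
  exists a, 0v; split; [reflexivity|]; rewrite vadd_0, (proj2 HL); reflexivity.
Qed.

(* On a space of dimension at least two, an operator of rank at most one is
   not surjective, hence not invertible. *)
Lemma rank_le1_spectrum0 (T : op X) y : dim_ge2 X ->
  (forall x, in_span X (y :: nil) (T x)) -> spectrum X T C0.
Proof.
  intros [u [w Hind]] Hspan [S [_ [_ HTS]]].
  assert (Hline : forall v, exists a, v = a *v y).
  { intro v; destruct (span1_inv _ _ (Hspan (S v))) as [a Ha]; exists (Copp a).
    rewrite <- (HTS v), vscal_0s, vadd_0l, Ha, vopp_scal, vscal_assoc.
    f_equal; ring. }
  destruct (Hline u) as [a Ha], (Hline w) as [b Hb].
  destruct (Hind b (Copp a)) as [Eb Ea].
  { rewrite Ha, Hb, !vscal_assoc, <- vscal_adds, <- (vscal_0s X y); f_equal; ring. }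
  assert (a = C0) by (replace a with (Copp (Copp a)) by ring; rewrite Ea; ring).
  subst a b; destruct (Hind C1 C0) as [E _]; [|exact (C1_neq0 E)].
  rewrite Ha, !vscal_0s, !vscal_0v, vadd_0; reflexivity.
Qed.

Lemma rank_le1_square (T : op X) y : dim_ge2 X -> linear X T ->
  (forall x, in_span X (y :: nil) (T x)) ->
  exists c, (forall x, T (T x) = c *v T x) /\ spectrum X T c.
Proof.
  intros Hd HT Hspan.
  destruct (classic (y = 0v)) as [Hy|Hy].
  - assert (Hz : forall x, T x = 0v).
    { intro x; destruct (span1_inv _ _ (Hspan x)) as [a ->]; rewrite Hy; apply vscal_0v. }
    exists C0; split; [intro x; rewrite !Hz, vscal_0v; auto | eapply rank_le1_spectrum0; eauto].
  - destruct (span1_inv _ _ (Hspan y)) as [c Hc]; exists c; split.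
    + intro x; destruct (span1_inv _ _ (Hspan x)) as [a ->].
      rewrite (proj2 HT), Hc, !vscal_assoc; f_equal; ring.
    + destruct (classic (c = C0)) as [->|Hc0]; [eapply rank_le1_spectrum0; eauto|].
      eapply eigen_spectrum; eauto.
Qed.

Lemma rank_le1_peripheral (T : op X) y : dim_ge2 X -> bounded_op X T ->
  (forall x, in_span X (y :: nil) (T x)) -> is_singleton (peripheral_spectrum X T).
Proof.
  intros Hd HT Hspan.
  destruct (rank_le1_square T y Hd (proj1 HT) Hspan) as [c [Hc Hsc]].
  apply (peripheral_singleton X T c); auto; intros lam Hl.
  assert (Hroot : peval (C0 :: Copp c :: C1 :: nil) lam = C0).
  { apply (spectrum_annihilated X T HT); auto; intro z.
    rewrite polyop_cons0; simpl.
    rewrite lin_0, vadd_0, vscal_1, (proj1 (proj1 HT)), (proj2 (proj1 HT)), Hc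
      by apply HT.
    rewrite <- vscal_adds, <- (vscal_0s X (T z)); f_equal; ring. }
  assert (Hfac : Cmul lam (Csub lam c) = C0) by (rewrite <- Hroot; simpl; ring).
  destruct (Cmul_eq0 _ _ Hfac) as [|E]; [left; auto | right].
  replace lam with (Cadd (Csub lam c) c) by ring; rewrite E; ring.
Qed.

End RankOne.

Lemma zorn_preorder (P : Type) (p0 : P) (le : P -> P -> Prop) :
  (forall x, le x x) -> (forall x y z, le x y -> le y z -> le x z) ->
  (forall Ch : P -> Prop, (forall x y, Ch x -> Ch y -> le x y \/ le y x) ->
     exists b, forall x, Ch x -> le x b) ->
  exists m, forall x, le m x -> le x m.
Proof.
  intros Hrefl Htrans Hchain.
  destruct (@classical_sets.ZL_preorder P p0 (fun x y => boolp.asbool (le x y)))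
    as [m Hm].
  - intro x; apply boolp.asboolT, Hrefl.
  - intros x y z Hxy Hyz; apply boolp.asboolT.
    apply boolp.asboolW in Hxy; apply boolp.asboolW in Hyz; eauto.
  - intros Ch Htot; destruct (Hchain Ch) as [b Hb].
    + intros x y Hx Hy; destruct (Htot x y Hx Hy) as [H|H];
        apply boolp.asboolW in H; auto.
    + exists b; intros x Hx; apply boolp.asboolT; auto.
  - exists m; intros x Hx; apply boolp.asboolW, Hm, boolp.asboolT, Hx.
Qed.

(** * The Hahn-Banach theorem

    For [u <> 0] there is a real-linear functional [f <= ||.||] with
    [f u = ||u||]: partial functionals dominated by the norm are extended one
    dimension at a time, and Zorn's lemma yields a maximal, hence total, one.
    The complex version follows by [h x = f x - i f (i x)]. *)

Section RealHahnBanach.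
Variable X : CBanach.
Local Notation "0v" := (vzero X).
Local Notation "x +v y" := (vadd X x y) (at level 50, left associativity).
Local Notation "a *v x" := (vscal X a x) (at level 40, left associativity).
Local Notation nrm := (vnorm X).

Definition rs (t : R) (x : X) : X := mkC t 0 *v x.

Lemma rs_add t x y : rs t (x +v y) = rs t x +v rs t y.
Proof. apply vscal_addv. Qed.
Lemma rs_adds t s x : rs (t + s) x = rs t x +v rs s x.
Proof. unfold rs; rewrite <- vscal_adds; f_equal; apply C_ext; simpl; ring. Qed.
Lemma rs_rs t s x : rs t (rs s x) = rs (t * s) x.
Proof. unfold rs; rewrite vscal_assoc; f_equal; apply C_ext; simpl; ring. Qed.
Lemma rs_1 x : rs 1 x = x.
Proof. unfold rs; rewrite <- (vscal_1 X x) at 2; reflexivity. Qed.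
Lemma rs_0 x : rs 0 x = 0v.
Proof. unfold rs; rewrite <- (vscal_0s X x); reflexivity. Qed.
Lemma rs_m1 x : rs (-1) x = vopp X x.
Proof. unfold rs; rewrite vopp_scal; f_equal; apply C_ext; simpl; ring. Qed.
Lemma rs_norm t x : nrm (rs t x) = Rabs t * nrm x.
Proof. unfold rs; rewrite vnorm_scal, Cabs_real; reflexivity. Qed.

Definition real_subspace (D : X -> Prop) : Prop :=
  D 0v /\ (forall x y, D x -> D y -> D (x +v y)) /\ (forall t x, D x -> D (rs t x)).

(** One-step extension of a real-linear [f <= ||.||] on [D] to [D + R z],
    by [f (y + t z) = f y + t c] for a suitable constant [c]. *)
Section OneStepExtension.
Variables (D : X -> Prop) (f : X -> R) (z : X) (c : R).
Hypothesis HD : real_subspace D.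
Hypothesis Hfa : forall x y, D x -> D y -> f (x +v y) = f x + f y.
Hypothesis Hfr : forall t x, D x -> f (rs t x) = t * f x.
Hypothesis Hz : ~ D z.

Definition ext_dom (x : X) : Prop := exists y t, D y /\ x = y +v rs t z.

Lemma ext_decomp_unique y1 t1 y2 t2 :
  D y1 -> D y2 -> y1 +v rs t1 z = y2 +v rs t2 z -> y1 = y2 /\ t1 = t2.
Proof.
  intros H1 H2 E; destruct HD as [HD0 [HDa HDr]].
  assert (Ht : t1 = t2).
  { apply NNPP; intro Hne; apply Hz.
    assert (E2 : rs (t1 - t2) z = y2 +v vopp X y1).
    { apply (vadd_cancel X (y1 +v rs t2 z)); transitivity (y2 +v rs t2 z).
      - rewrite <- vadd_assoc, <- rs_adds; replace (t2 + (t1 - t2)) with t1 by ring; exact E.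
      - rewrite (vadd_comm X y2 (vopp X y1)), vadd_assoc, (vadd_comm X y1 (rs t2 z)),
          <- (vadd_assoc X (rs t2 z)), vadd_opp, vadd_0, vadd_comm; reflexivity. }
    replace z with (rs (/ (t1 - t2)) (rs (t1 - t2) z))
      by (rewrite rs_rs, Rinv_l, rs_1 by lra; reflexivity).
    rewrite E2; apply HDr, HDa; auto; rewrite <- rs_m1; auto. }
  subst; split; auto; rewrite (vadd_comm X y1), (vadd_comm X y2) in E.
  eapply vadd_cancel; eauto.
Qed.

Definition ext_decomp (x : X) : X * R :=
  epsilon (inhabits (0v, 0%R)) (fun p => D (fst p) /\ x = fst p +v rs (snd p) z).

Definition ext_fun (x : X) : R := f (fst (ext_decomp x)) + snd (ext_decomp x) * c.

Lemma ext_fun_eq y t : D y -> ext_fun (y +v rs t z) = f y + t * c.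
Proof.
  intro Hy; unfold ext_fun.
  assert (H : exists p, D (fst p) /\ y +v rs t z = fst p +v rs (snd p) z)
    by (exists (y, t); simpl; auto).
  destruct (epsilon_spec (inhabits (0v, 0%R)) _ H) as [H1 H2].
  fold (ext_decomp (y +v rs t z)) in H1, H2.
  destruct (ext_decomp_unique _ _ _ _ Hy H1 H2) as [<- <-]; reflexivity.
Qed.

Lemma ext_dom_subspace : real_subspace ext_dom.
Proof.
  destruct HD as [HD0 [HDa HDr]]; split; [|split].
  - exists 0v, 0; split; auto; rewrite rs_0, vadd_0; auto.
  - intros x1 x2 [y1 [t1 [H1 ->]]] [y2 [t2 [H2 ->]]]; exists (y1 +v y2), (t1 + t2).
    split; auto; rewrite rs_adds, vadd_swap4; auto.
  - intros t x [y [s [H ->]]]; exists (rs t y), (t * s); split; auto.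
    rewrite rs_add, rs_rs; auto.
Qed.

Lemma ext_dom_incl x : D x -> ext_dom x.
Proof. intro H; exists x, 0; split; auto; rewrite rs_0, vadd_0; auto. Qed.

Lemma ext_dom_z : ext_dom z.
Proof. exists 0v, 1; split; [apply HD|]; rewrite rs_1, vadd_0l; auto. Qed.

Lemma ext_fun_add x1 x2 : ext_dom x1 -> ext_dom x2 ->
  ext_fun (x1 +v x2) = ext_fun x1 + ext_fun x2.
Proof.
  destruct HD as [HD0 [HDa HDr]]; intros [y1 [t1 [H1 ->]]] [y2 [t2 [H2 ->]]].
  rewrite vadd_swap4, <- rs_adds, !ext_fun_eq, Hfa; auto; ring.
Qed.

Lemma ext_fun_rs t x : ext_dom x -> ext_fun (rs t x) = t * ext_fun x.
Proof.
  destruct HD as [HD0 [HDa HDr]]; intros [y [s [H ->]]].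
  rewrite rs_add, rs_rs, !ext_fun_eq, Hfr; auto; ring.
Qed.

Lemma ext_fun_incl x : D x -> ext_fun x = f x.
Proof.
  intro H; replace x with (x +v rs 0 z) at 1 by (rewrite rs_0, vadd_0; auto).
  rewrite ext_fun_eq; auto; ring.
Qed.

Lemma ext_fun_z : ext_fun z = c.
Proof.
  replace z with (0v +v rs 1 z) at 1 by (rewrite rs_1, vadd_0l; auto).
  rewrite ext_fun_eq by apply HD; rewrite <- (rs_0 0v), Hfr by apply HD; ring.
Qed.

(* Domination survives the extension when [c] is squeezed between the two
   one-sided bounds obtained by dividing out [t < 0] resp. [t > 0]. *)
Hypothesis Hle : forall x, D x -> f x <= nrm x.
Hypothesis Hc1 : forall x, D x -> f x <= c + nrm (x +v vopp X z).
Hypothesis Hc2 : forall y, D y -> c <= nrm (y +v z) - f y.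

Lemma ext_fun_le x : ext_dom x -> ext_fun x <= nrm x.
Proof.
  destruct HD as [HD0 [HDa HDr]]; intros [y [t [H ->]]]; rewrite ext_fun_eq; auto.
  destruct (Rtotal_order t 0) as [Ht|[->|Ht]].
  - assert (Hc := Hc1 (rs (- / t) y) (HDr _ _ H)).
    rewrite Hfr in Hc by auto.
    replace (rs (- / t) y +v vopp X z) with (rs (- / t) (y +v rs t z)) in Hc
      by (rewrite rs_add, rs_rs, <- rs_m1; do 2 f_equal; field; lra).
    rewrite rs_norm, Rabs_right in Hc by (apply Rle_ge, Rlt_le, Ropp_0_gt_lt_contravar,
      Rinv_lt_0_compat; auto).
    apply Rmult_le_compat_l with (r := - t) in Hc; [|lra].
    replace (- t * (- / t * f y)) with (f y) in Hc by (field; lra).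
    replace (- t * (c + - / t * nrm (y +v rs t z))) with (- t * c + nrm (y +v rs t z))
      in Hc by (field; lra).
    lra.
  - rewrite rs_0, vadd_0, Rmult_0_l, Rplus_0_r; auto.
  - assert (Hc := Hc2 (rs (/ t) y) (HDr _ _ H)).
    rewrite Hfr in Hc by auto.
    replace (rs (/ t) y +v z) with (rs (/ t) (y +v rs t z)) in Hc
      by (rewrite rs_add, rs_rs, Rinv_l, rs_1 by lra; reflexivity).
    rewrite rs_norm, Rabs_right in Hc by (apply Rle_ge, Rlt_le, Rinv_0_lt_compat; auto).
    apply Rmult_le_compat_l with (r := t) in Hc; [|lra].
    replace (t * (/ t * nrm (y +v rs t z) - / t * f y)) with (nrm (y +v rs t z) - f y)
      in Hc by (field; lra).
    lra.
Qed.

End OneStepExtension.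

Lemma extension_constant (D : X -> Prop) (f : X -> R) z : real_subspace D ->
  (forall x y, D x -> D y -> f (x +v y) = f x + f y) -> (forall x, D x -> f x <= nrm x) ->
  exists c, (forall x, D x -> f x <= c + nrm (x +v vopp X z)) /\
            (forall y, D y -> c <= nrm (y +v z) - f y).
Proof.
  intros HD Hfa Hle.
  assert (Key : forall x y, D x -> D y -> f x - nrm (x +v vopp X z) <= nrm (y +v z) - f y).
  { intros x y Hx Hy; pose proof (Hle (x +v y) (proj1 (proj2 HD) _ _ Hx Hy)) as H.
    rewrite Hfa in H; auto.
    replace (x +v y) with ((x +v vopp X z) +v (y +v z)) in H
      by (rewrite vadd_swap4, (vadd_comm X (vopp X z)), vadd_opp, vadd_0; auto).
    pose proof (vnorm_triangle X (x +v vopp X z) (y +v z)); lra. }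
  set (S := fun r => exists x, D x /\ r = f x - nrm (x +v vopp X z)).
  destruct (completeness S) as [c [Hub Hlub]].
  - exists (nrm (0v +v z) - f 0v); intros r [x [Hx ->]]; apply Key; auto; apply HD.
  - exists (f 0v - nrm (0v +v vopp X z)), 0v; split; auto; apply HD.
  - exists c; split.
    + intros x Hx; assert (f x - nrm (x +v vopp X z) <= c) by (apply Hub; exists x; auto).
      lra.
    + intros y Hy; apply Hlub; intros r [x [Hx ->]]; apply Key; auto.
Qed.

Variable u : X.
Hypothesis Hu : u <> 0v.

Record partial_functional := mkPF {
  pf_dom : X -> Prop;
  pf_fun : X -> R;
  pf_dom_subspace : real_subspace pf_dom;
  pf_add : forall x y, pf_dom x -> pf_dom y -> pf_fun (x +v y) = pf_fun x + pf_fun y;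
  pf_rs : forall t x, pf_dom x -> pf_fun (rs t x) = t * pf_fun x;
  pf_le : forall x, pf_dom x -> pf_fun x <= nrm x;
  pf_dom_u : pf_dom u;
  pf_at_u : pf_fun u = nrm u }.

Definition pf_extends (e1 e2 : partial_functional) : Prop :=
  (forall x, pf_dom e1 x -> pf_dom e2 x) /\
  (forall x, pf_dom e1 x -> pf_fun e2 x = pf_fun e1 x).

Lemma extend_partial (e : partial_functional) z :
  ~ pf_dom e z -> exists e', pf_extends e e' /\ pf_dom e' z.
Proof.
  intro Hz; destruct (extension_constant (pf_dom e) (pf_fun e) z (pf_dom_subspace e)
    (pf_add e) (pf_le e)) as [c [Hc1 Hc2]].
  pose proof (pf_dom_subspace e) as HD; pose proof (pf_add e) as Ha;
    pose proof (pf_rs e) as Hr; pose proof (pf_le e) as Hl.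
  unshelve eexists (mkPF (ext_dom (pf_dom e) z) (ext_fun (pf_dom e) (pf_fun e) z c)
    _ _ _ _ _ _); simpl.
  - apply ext_dom_subspace; auto.
  - intros; apply ext_fun_add; auto.
  - intros; apply ext_fun_rs; auto.
  - intros; apply ext_fun_le; auto.
  - apply ext_dom_incl, pf_dom_u.
  - rewrite ext_fun_incl; auto; [apply pf_at_u | apply pf_dom_u].
  - split; [split|].
    + intros; apply ext_dom_incl; auto.
    + intros; apply ext_fun_incl; auto.
    + apply ext_dom_z; auto.
Qed.

(* The functional [t u |-> t ||u||] on the real line through [u]: the
   one-step extension of the zero functional on [{0}]. *)
Definition zero_dom (x : X) : Prop := x = 0v.

Lemma zero_dom_subspace : real_subspace zero_dom.
Proof.
  split; [|split]; unfold zero_dom; intros; subst; [| apply vadd_0 | apply vscal_0v]; auto.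
Qed.

Definition base_functional : partial_functional.
Proof.
  refine (mkPF (ext_dom zero_dom u) (ext_fun zero_dom (fun _ => 0) u (nrm u))
    (ext_dom_subspace _ _ zero_dom_subspace) _ _ _ (ext_dom_z _ _ zero_dom_subspace) _);
    intros; try apply ext_fun_add; try apply ext_fun_rs; try apply ext_fun_z;
    try apply zero_dom_subspace; auto; intros; try ring.
  apply (ext_fun_le zero_dom (fun _ => 0) u (nrm u)); auto;
    [apply zero_dom_subspace | intros; ring | | |]; unfold zero_dom; intros; subst.
  - apply vnorm_nonneg.
  - pose proof (vnorm_nonneg X u); pose proof (vnorm_nonneg X (0v +v vopp X u)); lra.
  - rewrite vadd_0l; lra.
Defined.

(* Every chain of partial functionals has an upper bound: the union of the
   domains, with the common values (the empty chain is bounded by the base). *)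
Lemma chain_upper_bound (Ch : partial_functional -> Prop) :
  (forall e1 e2, Ch e1 -> Ch e2 -> pf_extends e1 e2 \/ pf_extends e2 e1) ->
  exists b, forall e, Ch e -> pf_extends e b.
Proof.
  intro HC; destruct (classic (exists e, Ch e)) as [[e0 He0]|Hne].
  2: { exists base_functional; intros e He; exfalso; eauto. }
  set (UD := fun x => exists e, Ch e /\ pf_dom e x).
  set (owner := fun x => epsilon (inhabits e0) (fun e => Ch e /\ pf_dom e x)).
  set (Uf := fun x => pf_fun (owner x) x).
  assert (Hown : forall x, UD x -> Ch (owner x) /\ pf_dom (owner x) x)
    by (intros x Hx; apply (epsilon_spec (inhabits e0) (fun e => Ch e /\ pf_dom e x)), Hx).
  assert (HUf : forall e x, Ch e -> pf_dom e x -> Uf x = pf_fun e x).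
  { intros e x He Hx; destruct (Hown x) as [H1 H2]; [exists e; auto|].
    unfold Uf; destruct (HC _ _ H1 He) as [[_ Hl]|[_ Hl]]; [symmetry|]; apply Hl; auto. }
  assert (Hjoin : forall x y, UD x -> UD y -> exists e, Ch e /\ pf_dom e x /\ pf_dom e y).
  { intros x y [e1 [H1 Hx]] [e2 [H2 Hy]].
    destruct (HC _ _ H1 H2) as [[Hl _]|[Hl _]]; [exists e2 | exists e1]; auto. }
  assert (Hsub : real_subspace UD).
  { split; [|split].
    - exists e0; split; auto; apply (pf_dom_subspace e0).
    - intros x y Hx Hy; destruct (Hjoin x y Hx Hy) as [e [He [H1 H2]]].
      exists e; split; auto; apply (pf_dom_subspace e); auto.
    - intros t x [e [He Hx]]; exists e; split; auto; apply (pf_dom_subspace e); auto. }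
  unshelve eexists (mkPF UD Uf Hsub _ _ _ _ _).
  - intros x y Hx Hy; destruct (Hjoin x y Hx Hy) as [e [He [H1 H2]]].
    rewrite !(HUf e); auto; [apply pf_add | apply (pf_dom_subspace e)]; auto.
  - intros t x [e [He Hx]]; rewrite !(HUf e); auto;
      [apply pf_rs | apply (pf_dom_subspace e)]; auto.
  - intros x [e [He Hx]]; rewrite (HUf e); auto; apply pf_le; auto.
  - exists e0; split; auto; apply pf_dom_u.
  - rewrite (HUf e0); auto; [apply pf_at_u | apply pf_dom_u].
  - intros e He; split; simpl; [intros x Hx; exists e; auto | intros; apply HUf; auto].
Qed.

Lemma real_hahn_banach : exists f : X -> R,
  (forall x y, f (x +v y) = f x + f y) /\ (forall t x, f (rs t x) = t * f x) /\
  (forall x, f x <= nrm x) /\ f u = nrm u.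
Proof.
  destruct (zorn_preorder partial_functional base_functional pf_extends) as [m Hm].
  - intro e; split; auto.
  - intros e1 e2 e3 [H1 H2] [H3 H4]; split; intros; auto; rewrite H4, H2; auto.
  - apply chain_upper_bound.
  - assert (Hall : forall z, pf_dom m z).
    { intro z; apply NNPP; intro Hz; destruct (extend_partial m z Hz) as [e' [Hle Hz']].
      apply Hz, (proj1 (Hm e' Hle)), Hz'. }
    exists (pf_fun m); repeat split; intros;
      [apply pf_add | apply pf_rs | apply pf_le | apply pf_at_u]; auto.
Qed.

End RealHahnBanach.

Definition blf (X : CBanach) (h : X -> C) : Prop :=
  (forall x y, h (vadd X x y) = Cadd (h x) (h y)) /\
  (forall a x, h (vscal X a x) = Cmul a (h x)) /\
  exists M, forall x, Cabs (h x) <= M * vnorm X x.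

Lemma complex_hahn_banach (X : CBanach) u : u <> vzero X ->
  exists h, blf X h /\ h u <> C0.
Proof.
  intro Hu; destruct (real_hahn_banach X u Hu) as [f [Fa [Fr [Fle Fu]]]].
  set (Ci := mkC 0 1).
  assert (Fabs : forall x, Rabs (f x) <= vnorm X x).
  { intro x; apply Rabs_le; split; auto.
    pose proof (Fle (rs X (-1) x)) as H; rewrite Fr, rs_m1, vnorm_opp in H; lra. }
  assert (Hdec : forall a x, vscal X a x = vadd X (rs X (Re a) x) (rs X (Im a) (vscal X Ci x))).
  { intros a x; unfold rs; rewrite vscal_assoc, <- vscal_adds; f_equal.
    destruct a; apply C_ext; simpl; ring. }
  exists (fun x => mkC (f x) (- f (vscal X Ci x))); split; [split; [|split]|].
  - intros x y; rewrite Fa, vscal_addv, Fa; apply C_ext; simpl; ring.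
  - intros a x; rewrite (vscal_assoc X Ci a x), (Hdec a x), (Hdec (Cmul Ci a) x), !Fa, !Fr.
    destruct a as [p q]; apply C_ext; unfold Ci; simpl; ring.
  - exists 2; intro x; eapply Rle_trans; [apply Cabs_le_re_im|]; simpl.
    rewrite Rabs_Ropp; pose proof (Fabs x); pose proof (Fabs (vscal X Ci x)) as Hi.
    rewrite vnorm_scal in Hi; replace (Cabs Ci) with 1 in Hi; [lra|].
    unfold Cabs, Ci; simpl; replace (0 * 0 + 1 * 1) with 1 by ring; symmetry; apply sqrt_1.
  - intro E; injection E; intros _ E1; rewrite Fu in E1; apply Hu, vnorm_eq0; auto.
Qed.

(** By induction, one builds
    simultaneously a bounded projection onto [span l] and, using Hahn-Banach
    on [v - P v], a functional equal to [1] at [v] and vanishing on [l]. *)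

Section Functionals.
Variable X : CBanach.
Local Notation "0v" := (vzero X).
Local Notation "x +v y" := (vadd X x y) (at level 50, left associativity).
Local Notation "a *v x" := (vscal X a x) (at level 40, left associativity).
Local Notation nrm := (vnorm X).
Local Notation m1 := (Copp C1).

Lemma blf_0 h : blf X h -> h 0v = C0.
Proof. intros [_ [Hs _]]; rewrite <- (vscal_0s X 0v), Hs; ring. Qed.

Lemma blf_comb h a b x y :
  blf X h -> h (a *v x +v b *v y) = Cadd (Cmul a (h x)) (Cmul b (h y)).
Proof. intros [Ha [Hs _]]; rewrite Ha, !Hs; reflexivity. Qed.

Lemma rank1op_bounded (g : X -> C) w : blf X g -> bounded_op X (fun x => g x *v w).
Proof.
  intros [Ga [Gs [M HM]]]; split; [split|].
  - intros; rewrite Ga, vscal_adds; reflexivity.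
  - intros; rewrite Gs, vscal_assoc; reflexivity.
  - exists (Rabs M * nrm w); intro x; rewrite vnorm_scal.
    pose proof (HM x); pose proof (vnorm_nonneg X x); pose proof (vnorm_nonneg X w).
    pose proof (Rle_abs M); pose proof (Cabs_nonneg (g x)).
    apply Rle_trans with (M * nrm x * nrm w); [apply Rmult_le_compat_r; auto|].
    replace (Rabs M * nrm w * nrm x) with (Rabs M * nrm x * nrm w) by ring.
    apply Rmult_le_compat_r; auto; apply Rmult_le_compat_r; auto.
Qed.

Lemma blf_comp h (S : op X) : blf X h -> bounded_op X S -> blf X (fun x => h (S x)).
Proof.
  intros [Ha [Hs [M HM]]] [[Sa Ss] [N HN]]; split; [|split].
  - intros; rewrite Sa, Ha; auto.
  - intros; rewrite Ss, Hs; auto.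
  - exists (Rabs M * Rabs N); intro x; eapply Rle_trans; [apply HM|].
    pose proof (HN x); pose proof (vnorm_nonneg X x); pose proof (vnorm_nonneg X (S x)).
    pose proof (Rle_abs M); pose proof (Rle_abs N); pose proof (Rabs_pos M).
    apply Rle_trans with (Rabs M * nrm (S x)); [nra|].
    rewrite Rmult_assoc; apply Rmult_le_compat_l; nra.
Qed.

Lemma blf_scal h c : blf X h -> blf X (fun x => Cmul c (h x)).
Proof.
  intros [Ha [Hs [M HM]]]; split; [|split].
  - intros; rewrite Ha; ring.
  - intros; rewrite Hs; ring.
  - exists (Cabs c * M); intro x; rewrite Cabs_mul, Rmult_assoc.
    apply Rmult_le_compat_l; [apply Cabs_nonneg | auto].
Qed.

Lemma blf_add h1 h2 : blf X h1 -> blf X h2 -> blf X (fun x => Cadd (h1 x) (h2 x)).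
Proof.
  intros [Ha [Hs [M HM]]] [Ha2 [Hs2 [N HN]]]; split; [|split].
  - intros; rewrite Ha, Ha2; ring.
  - intros; rewrite Hs, Hs2; ring.
  - exists (M + N); intro x; eapply Rle_trans; [apply Cabs_add|].
    pose proof (HM x); pose proof (HN x); lra.
Qed.

Lemma in_span_0 l : in_span X l 0v.
Proof.
  induction l; simpl; auto; exists C0, 0v; split; auto; rewrite vscal_0s, vadd_0; auto.
Qed.

Lemma in_span_add l x y : in_span X l x -> in_span X l y -> in_span X l (x +v y).
Proof.
  revert x y; induction l as [|v l IH]; simpl; intros x y.
  - intros -> ->; apply vadd_0.
  - intros [a [w [Hw ->]]] [b [w' [Hw' ->]]]; exists (Cadd a b), (w +v w'); split; auto.
    rewrite vadd_swap4, vscal_adds; auto.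
Qed.

Lemma in_span_scal l c x : in_span X l x -> in_span X l (c *v x).
Proof.
  revert x; induction l as [|v l IH]; simpl; intros x.
  - intros ->; apply vscal_0v.
  - intros [a [w [Hw ->]]]; exists (Cmul c a), (c *v w); split; auto.
    rewrite vscal_addv, vscal_assoc; auto.
Qed.

Fixpoint indep (l : list X) : Prop :=
  match l with nil => True | v :: l' => ~ in_span X l' v /\ indep l' end.

(* Bounded projections onto [span l] yield separating functionals:
   [g x = psi (x - P x) / psi (v - P v)] for a Hahn-Banach functional [psi]. *)
Lemma separating_of_projection l v (P : op X) : bounded_op X P ->
  (forall w, In w l -> P w = w) -> (forall x, in_span X l (P x)) -> ~ in_span X l v ->
  exists g, blf X g /\ g v = C1 /\ forall w, In w l -> g w = C0.
Proof.
  intros HP HPl HPs Hv.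
  set (Q := op_add X (op_id X) (fun x => m1 *v P x)).
  assert (HQ : bounded_op X Q)
    by (apply add_bounded; [apply id_bounded | apply scal_bounded; auto]).
  assert (Hu : Q v <> 0v).
  { intro E; apply Hv; unfold Q, op_add, op_id in E; rewrite <- vopp_scal in E.
    apply vsub_eq0 in E; rewrite E; apply HPs. }
  destruct (complex_hahn_banach X (Q v) Hu) as [psi [Hpsi Hpu]].
  exists (fun x => Cmul (Cinv (psi (Q v))) (psi (Q x))); split; [|split].
  - apply blf_scal, blf_comp; auto.
  - field; auto.
  - intros w Hw; unfold Q at 2, op_add, op_id; rewrite (HPl w Hw), <- vopp_scal, vadd_opp, blf_0
      by auto; ring.
Qed.

Lemma bounded_projection l : indep l ->
  exists P, bounded_op X P /\ (forall w, In w l -> P w = w) /\ (forall x, in_span X l (P x)).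
Proof.
  induction l as [|v l IH]; simpl.
  - intros _; exists (fun _ => 0v); split; [|split; [tauto | auto]].
    split; [split|]; intros; [rewrite vadd_0 | rewrite vscal_0v | exists 0]; auto.
    intros; rewrite vnorm_0; lra.
  - intros [Hv Hl]; destruct (IH Hl) as [P [HP [HPl HPs]]].
    destruct (separating_of_projection l v P HP HPl HPs Hv) as [g [Hg [Hgv Hgl]]].
    set (u := v +v m1 *v P v).
    exists (op_add X P (fun x => g x *v u)); split; [|split].
    + apply add_bounded, rank1op_bounded; auto.
    + intros w [<-|Hw]; unfold op_add.
      * rewrite Hgv, vscal_1; unfold u; rewrite <- vopp_scal, (vadd_comm X v),
          vadd_assoc, vadd_opp, vadd_0l; auto.
      * rewrite Hgl, vscal_0s, vadd_0; auto.
    + intro x; unfold op_add; exists (g x), (P x +v Cmul (g x) m1 *v P v); split.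
      * apply in_span_add; auto; apply in_span_scal; auto.
      * unfold u; rewrite vscal_addv, <- vscal_assoc, !vadd_assoc,
          (vadd_comm X (P x) (g x *v v)); auto.
Qed.

Lemma separating_functional v l : indep (v :: l) ->
  exists g, blf X g /\ g v = C1 /\ forall w, In w l -> g w = C0.
Proof.
  intros [Hv Hl]; destruct (bounded_projection l Hl) as [P [HP [HPl HPs]]].
  apply (separating_of_projection l v P); auto.
Qed.

Lemma interpolation (l : list (X * C)) : indep (map fst l) ->
  exists h, blf X h /\ forall k c, In (k, c) l -> h k = c.
Proof.
  induction l as [|[v c] l IH]; simpl; intro Hi.
  - exists (fun _ => C0); split; [|tauto]; split; [|split]; intros; [ring | ring |].
    exists 0; intros; rewrite Cabs_C0; lra.
  - destruct (separating_functional v (map fst l) Hi) as [g [Hg [Hgv Hgl]]].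
    destruct (IH (proj2 Hi)) as [h0 [Hh0 Hh0l]].
    exists (fun x => Cadd (h0 (x +v Cmul m1 (g x) *v v)) (Cmul c (g x))); split.
    + apply blf_add; [|apply blf_scal; auto]; apply blf_comp; auto.
      apply add_bounded; [apply id_bounded|].
      apply (rank1op_bounded (fun x => Cmul m1 (g x))), blf_scal; auto.
    + intros k c' [E|Hk].
      * injection E; intros <- <-; rewrite Hgv.
        replace (Cmul m1 C1) with m1 by ring.
        rewrite <- vopp_scal, vadd_opp, blf_0 by auto; ring.
      * rewrite (Hgl k) by (change k with (fst (k, c')); apply in_map; auto).
        replace (Cmul m1 C0) with C0 by ring; rewrite vscal_0s, vadd_0, (Hh0l k c' Hk).
        ring.
Qed.

End Functionals.

(** * The rank-two test operator

    The operator [B z = h1(z) w1 + om h2(z) w2] has rank two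
    and [B^s B^r = J], where [J] fixes [w1] and negates [w2].  If the
    compression [M = (h_i (A w_j))] of [A] has equal diagonal entries [kap] and
    [det M = del <> 0], then [Phi = J A] acts on [span{w1, w2}] by the traceless
    matrix [J M], so [Phi^3 = del Phi] and [T = B^r A B^s] satisfies
    [T^4 = del T^2].  Hence [sigma(T)] lies in [{0} u {mu, -mu}] for
    [mu^2 = del], and [mu, -mu] are both eigenvalues: the peripheral spectrum
    of [T] has two points. *)

Lemma traceless_eigenvector kap b c lam :
  Cmul lam lam = Csub (Cmul kap kap) (Cmul b c) -> lam <> C0 ->
  exists p q, ~ (p = C0 /\ q = C0) /\
    Cadd (Cmul p kap) (Cmul q b) = Cmul lam p /\
    Copp (Cadd (Cmul p c) (Cmul q kap)) = Cmul lam q.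
Proof.
  intros Hl Hl0; destruct (classic (Cadd kap lam = C0 /\ c = C0)) as [[Ek Ec]|Hne].
  - assert (Ekap : kap = Copp lam)
      by (replace kap with (Csub (Cadd kap lam) lam) by ring; rewrite Ek; ring).
    subst kap c; exists b, (Cmul (Cadd C1 C1) lam); repeat split; try ring.
    intros [_ E]; destruct (Cmul_eq0 _ _ E); [apply C2_neq0 | apply Hl0]; auto.
  - exists (Cadd kap lam), (Copp c); repeat split; try ring.
    + intros [E1 E2]; apply Hne; split; auto.
      replace c with (Copp (Copp c)) by ring; rewrite E2; ring.
    + transitivity (Cadd (Csub (Cmul kap kap) (Cmul b c)) (Cmul lam kap)); [ring|].
      rewrite <- Hl; ring.
Qed.

Section TestOperator.
Variable X : CBanach.
Local Notation "0v" := (vzero X).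
Local Notation "x +v y" := (vadd X x y) (at level 50, left associativity).
Local Notation "a *v x" := (vscal X a x) (at level 40, left associativity).

Variable A : op X.
Hypothesis HA : bounded_op X A.
Variables (w1 w2 : X) (h1 h2 : X -> C).
Hypotheses (Hh1 : blf X h1) (Hh2 : blf X h2).
Hypotheses (H11 : h1 w1 = C1) (H12 : h1 w2 = C0) (H21 : h2 w1 = C0) (H22 : h2 w2 = C1).
Variables (r s : nat) (om : C).
Hypothesis Hrs : (1 <= r + s)%nat.
Hypothesis Hom : Cpow om (r + s) = Copp C1.
Hypothesis Hkap : h1 (A w1) = h2 (A w2).
Let kap := h1 (A w1).
Let k12 := h1 (A w2).
Let k21 := h2 (A w1).
Let del := Csub (Cmul kap kap) (Cmul k12 k21).
Hypothesis Hdel : del <> C0.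

Definition pair_vec (a b : C) : X := a *v w1 +v b *v w2.

Lemma h1_pair a b : h1 (pair_vec a b) = a.
Proof. unfold pair_vec; rewrite blf_comb, H11, H12 by auto; ring. Qed.

Lemma h2_pair a b : h2 (pair_vec a b) = b.
Proof. unfold pair_vec; rewrite blf_comb, H21, H22 by auto; ring. Qed.

Lemma pair_scal c a b : c *v pair_vec a b = pair_vec (Cmul c a) (Cmul c b).
Proof. unfold pair_vec; rewrite vscal_addv, !vscal_assoc; auto. Qed.

Lemma pair_eq0 a b : pair_vec a b = 0v -> a = C0 /\ b = C0.
Proof.
  intro E; split; [rewrite <- (h1_pair a b) | rewrite <- (h2_pair a b)];
    rewrite E; apply blf_0; auto.
Qed.

Definition test_op (z : X) : X := pair_vec (h1 z) (Cmul om (h2 z)).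

Lemma test_op_bounded : bounded_op X test_op.
Proof.
  apply (add_bounded X (fun z => h1 z *v w1) (fun z => Cmul om (h2 z) *v w2));
    apply rank1op_bounded; [| apply blf_scal]; auto.
Qed.

Lemma test_op_rank2 : rank_le X 2 test_op.
Proof.
  exists (w1 :: w2 :: nil); split; auto; intro z; simpl.
  exists (h1 z), (Cmul om (h2 z) *v w2); split; auto.
  exists (Cmul om (h2 z)), 0v; split; auto; symmetry; apply vadd_0.
Qed.

Lemma test_pow_pair k a b :
  op_pow X test_op k (pair_vec a b) = pair_vec a (Cmul (Cpow om k) b).
Proof.
  unfold op_pow; induction k as [|k IH]; simpl.
  - f_equal; ring.
  - rewrite IH; unfold test_op; rewrite h1_pair, h2_pair; f_equal; ring.
Qed.

Definition flip (z : X) : X := pair_vec (h1 z) (Copp (h2 z)).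

Lemma test_pow_flip z : op_pow X test_op s (op_pow X test_op r z) = flip z.
Proof.
  assert (Hneg : forall b, Cmul (Cpow om (r + s)) b = Copp b) by (intro; rewrite Hom; ring).
  unfold op_pow; rewrite <- Nat.iter_add, Nat.add_comm.
  destruct (r + s)%nat as [|m]; [lia|].
  rewrite Nat.iter_succ_r; fold (op_pow X test_op m (test_op z)).
  unfold test_op at 2; rewrite test_pow_pair; unfold flip.
  rewrite <- Hneg; f_equal; simpl; ring.
Qed.

Definition compress (z : X) : X := flip (A z).

Lemma compress_pair a b : compress (pair_vec a b) =
  pair_vec (Cadd (Cmul a kap) (Cmul b k12)) (Copp (Cadd (Cmul a k21) (Cmul b kap))).
Proof.
  unfold compress, flip, pair_vec; rewrite (lin_comb X A) by apply HA.
  rewrite !blf_comb by auto; unfold kap, k12, k21; rewrite <- Hkap; auto.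
Qed.

Lemma compress_cube z : compress (compress (compress z)) = del *v compress z.
Proof.
  unfold compress at 3 4, flip; rewrite !compress_pair, pair_scal; unfold del.
  f_equal; ring.
Qed.

Definition sandwich : op X := op_comp X (op_pow X test_op r) (op_comp X A (op_pow X test_op s)).

Lemma sandwich_bounded : bounded_op X sandwich.
Proof.
  apply comp_bounded; [|apply comp_bounded; auto]; apply pow_bounded, test_op_bounded.
Qed.

Lemma sandwich_sq x :
  sandwich (sandwich x) = op_pow X test_op r (A (compress (op_pow X test_op s x))).
Proof. unfold sandwich, op_comp; rewrite test_pow_flip; reflexivity. Qed.

Lemma sandwich_quartic x :
  sandwich (sandwich (sandwich (sandwich x))) = del *v sandwich (sandwich x).
Proof.
  rewrite (sandwich_sq (sandwich (sandwich x))), sandwich_sq, test_pow_flip.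
  fold (compress (compress (op_pow X test_op s x))); rewrite compress_cube.
  rewrite (proj2 (proj1 HA)), (proj2 (proj1 (pow_bounded X _ r test_op_bounded))).
  reflexivity.
Qed.

Lemma sandwich_spectrum_sub lam :
  spectrum X sandwich lam -> lam = C0 \/ Cmul lam lam = del.
Proof.
  intro Hl.
  assert (Hroot : peval (C0 :: C0 :: Copp del :: C0 :: C1 :: nil) lam = C0).
  { apply (spectrum_annihilated X sandwich sandwich_bounded); auto; intro z.
    rewrite !polyop_cons0; simpl.
    set (L := proj1 sandwich_bounded).
    rewrite (lin_0 X sandwich L), vadd_0, vscal_1, vscal_0s, vadd_0l.
    rewrite (proj1 L), (proj2 L), (proj1 L), (proj2 L), sandwich_quartic, <- vscal_adds.
    rewrite <- (vscal_0s X (sandwich (sandwich z))); f_equal; ring. }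
  assert (Hfac : Cmul (Cmul lam lam) (Csub (Cmul lam lam) del) = C0)
    by (rewrite <- Hroot; simpl; ring).
  destruct (Cmul_eq0 _ _ Hfac) as [E|E].
  - left; destruct (Cmul_eq0 _ _ E); auto.
  - right; replace (Cmul lam lam) with (Cadd (Csub (Cmul lam lam) del) del) by ring.
    rewrite E; ring.
Qed.

(* An eigenvector [z] of [Phi] gives the eigenvector [B^r A z] of [T]. *)
Lemma sandwich_eigen lam : Cmul lam lam = del -> spectrum X sandwich lam.
Proof.
  intro Hl; assert (Hl0 : lam <> C0) by (intro E; apply Hdel; rewrite <- Hl, E; ring).
  destruct (traceless_eigenvector kap k12 k21 lam Hl Hl0) as [p [q [Hpq [E1 E2]]]].
  set (z := pair_vec p q).
  assert (Hz : compress z = lam *v z)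
    by (unfold z; rewrite compress_pair, E1, E2, pair_scal; auto).
  assert (Lr := proj1 (pow_bounded X _ r test_op_bounded)).
  apply (eigen_spectrum X sandwich lam (op_pow X test_op r (A z))).
  - intro E; apply Hpq, pair_eq0; fold z.
    assert (E' := test_pow_flip (A z)); fold (compress z) in E'.
    rewrite E, (lin_0 X _ (proj1 (pow_bounded X _ s test_op_bounded))), Hz in E'.
    destruct (vscal_eq0 X _ _ (eq_sym E')) as [|]; [contradiction | auto].
  - unfold sandwich at 1, op_comp; rewrite test_pow_flip; fold (compress z).
    rewrite Hz, (proj2 (proj1 HA)), (proj2 Lr); reflexivity.
Qed.

Lemma sandwich_not_singleton : ~ is_singleton (peripheral_spectrum X sandwich).
Proof.
  destruct (Csqrt_ex del) as [mu Hmu].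
  apply (peripheral_not_singleton X sandwich mu).
  - intro E; apply Hdel; rewrite <- Hmu, E; ring.
  - intros lam Hl; rewrite Hmu; apply sandwich_spectrum_sub, Hl.
  - apply sandwich_eigen, Hmu.
  - apply sandwich_eigen; rewrite <- Hmu; ring.
Qed.

End TestOperator.

(** * Operators of rank at least two admit a good compression

    According to how [A] acts on [x, A x, A^2 x]:
    - some [x, A x, A^2 x] are independent: take [w = (x, A x)] with
      compression [[0, -1], [1, 0]];
    - some [x, A x] are independent with [A^2 x = al x + be A x], [al <> 0]:
      take [w = (x, A x - be/2 x)], whose compression has diagonal entries
      [be/2] and determinant [-al];
    - otherwise [A^2 x] is a multiple of [A x] for all [x]; then [A] acts as
      a scalar [b] on its range, and we use two independent vectors of the
      range (compression [b I], if [b <> 0]) or of their preimages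
      (compression [I], if [b = 0]). *)

Definition good_compression (X : CBanach) (A : op X) : Prop :=
  exists w1 w2 h1 h2, blf X h1 /\ blf X h2 /\
    h1 w1 = C1 /\ h1 w2 = C0 /\ h2 w1 = C0 /\ h2 w2 = C1 /\
    h1 (A w1) = h2 (A w2) /\
    Csub (Cmul (h1 (A w1)) (h1 (A w1))) (Cmul (h1 (A w2)) (h2 (A w1))) <> C0.

Section GoodCompression.
Variable X : CBanach.
Local Notation "0v" := (vzero X).
Local Notation "x +v y" := (vadd X x y) (at level 50, left associativity).
Local Notation "a *v x" := (vscal X a x) (at level 40, left associativity).
Local Notation m1 := (Copp C1).

Lemma indep2 u v a b : indep X (u :: v :: nil) -> a *v u +v b *v v = 0v -> a = C0 /\ b = C0.
Proof.
  intros [Hu [Hv _]] E; simpl in Hv.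
  destruct (classic (a = C0)) as [Ha|Ha].
  - subst; rewrite vscal_0s, vadd_0l in E; split; auto.
    destruct (vscal_eq0 X _ _ E); [auto | contradiction].
  - exfalso; apply Hu; exists (Cmul (Copp (Cinv a)) b), 0v; split; [simpl; auto|].
    rewrite vadd_0; apply (vscal_inj X a); auto; rewrite vscal_assoc.
    replace (Cmul a (Cmul (Copp (Cinv a)) b)) with (Copp b) by (field; auto).
    apply (vadd_cancel X (b *v v)); rewrite (vadd_comm X (b *v v) (a *v u)), E,
      <- vscal_adds, <- (vscal_0s X v) at 1; f_equal; ring.
Qed.

Variable A : op X.
Hypothesis HA : bounded_op X A.
Let LA : linear X A := proj1 HA.

Lemma compression_of_cyclic3 x :
  indep X (A (A x) :: A x :: x :: nil) -> good_compression X A.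
Proof.
  intro H.
  destruct (interpolation X ((A (A x), m1) :: (A x, C0) :: (x, C1) :: nil) H)
    as [h1 [Hh1 V1]].
  destruct (interpolation X ((A (A x), C0) :: (A x, C1) :: (x, C0) :: nil) H)
    as [h2 [Hh2 V2]].
  exists x, (A x), h1, h2; do 2 (split; auto).
  rewrite (V1 x C1), (V1 (A x) C0), (V1 (A (A x)) m1), (V2 x C0), (V2 (A x) C1),
    (V2 (A (A x)) C0) by (simpl; auto).
  repeat split; auto; intro E; apply C1_neq0; rewrite <- E; ring.
Qed.

Lemma compression_of_cyclic2 x al be : indep X (A x :: x :: nil) -> al <> C0 ->
  A (A x) = al *v x +v be *v A x -> good_compression X A.
Proof.
  intros Hi Hal E.
  set (bh := Cmul be (Cinv (Cadd C1 C1))).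
  destruct (interpolation X ((A x, bh) :: (x, C1) :: nil) Hi) as [h1 [Hh1 V1]].
  destruct (interpolation X ((A x, C1) :: (x, C0) :: nil) Hi) as [h2 [Hh2 V2]].
  assert (a1 : h1 (A x) = bh) by (apply V1; simpl; auto).
  assert (a2 : h1 x = C1) by (apply V1; simpl; auto).
  assert (b1 : h2 (A x) = C1) by (apply V2; simpl; auto).
  assert (b2 : h2 x = C0) by (apply V2; simpl; auto).
  set (w2 := C1 *v A x +v Copp bh *v x).
  assert (Aw2 : A w2 = C1 *v A (A x) +v Copp bh *v A x) by (apply lin_comb; auto).
  exists x, w2, h1, h2; do 2 (split; auto).
  unfold w2 at 1 2; rewrite Aw2, !blf_comb, E, !blf_comb, a1, a2, b1, b2 by auto.
  repeat split; auto; try (unfold bh; field; apply C2_neq0).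
  intro F; apply Hal.
  replace al with (Copp (Csub (Cmul bh bh)
    (Cmul (Cadd (Cmul C1 (Cadd (Cmul al C1) (Cmul be bh))) (Cmul (Copp bh) bh)) C1)))
    by (unfold bh; field; apply C2_neq0).
  rewrite F; ring.
Qed.

Lemma orbit_trichotomy x :
  indep X (A (A x) :: A x :: x :: nil) \/
  (exists al be, indep X (A x :: x :: nil) /\ al <> C0 /\ A (A x) = al *v x +v be *v A x) \/
  exists be, A (A x) = be *v A x.
Proof.
  destruct (classic (indep X (A x :: x :: nil))) as [Hi|Hi].
  - destruct (classic (in_span X (A x :: x :: nil) (A (A x)))) as [Hs|Hs];
      [| left; split; auto].
    destruct Hs as [a [w [[b [w' [Hw' ->]]] E]]]; simpl in Hw'; subst.
    rewrite vadd_0 in E; destruct (classic (b = C0)) as [->|Hb].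
    + right; right; exists a; rewrite E, vscal_0s, vadd_0; auto.
    + right; left; exists b, a; split; [exact Hi | split; [exact Hb|]].
      rewrite E, vadd_comm; auto.
  - right; right; simpl in Hi.
    destruct (classic (in_span X (x :: nil) (A x))) as [Hs|Hs].
    + destruct (span1_inv X _ _ Hs) as [c Hc]; exists c.
      rewrite Hc at 1; rewrite (proj2 LA); auto.
    + assert (x = 0v) by tauto; subst; exists C0; rewrite !lin_0, vscal_0v by auto; auto.
Qed.

Lemma independent_images : op_nonzero X A -> ~ rank_le X 1 A ->
  exists x1 x2, indep X (A x1 :: A x2 :: nil).
Proof.
  intros [x2 Hx2] Hr.
  assert (Hx1 : exists x1, ~ in_span X (A x2 :: nil) (A x1)).
  { apply NNPP; intro Hn; apply Hr; exists (A x2 :: nil); split; auto; intro x.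
    apply NNPP; intro Hx; apply Hn; eauto. }
  destruct Hx1 as [x1 Hx1]; exists x1, x2; simpl; repeat split; auto.
Qed.

Lemma common_eigenvalue x1 x2 : (forall x, exists be, A (A x) = be *v A x) ->
  indep X (A x1 :: A x2 :: nil) ->
  exists b, A (A x1) = b *v A x1 /\ A (A x2) = b *v A x2.
Proof.
  intros H Hi; destruct (H x1) as [b1 E1], (H x2) as [b2 E2], (H (x1 +v x2)) as [b3 E3].
  rewrite !(proj1 LA), E1, E2 in E3.
  assert (Hz : Csub b1 b3 *v A x1 +v Csub b2 b3 *v A x2 = 0v).
  { unfold Csub; rewrite !vscal_adds, vadd_swap4, E3, <- (vscal_addv X (Copp b3)),
      <- vscal_adds, <- (vscal_0s X (A x1 +v A x2)); f_equal; ring. }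
  destruct (indep2 _ _ _ _ Hi Hz) as [F1 F2]; exists b1; split; auto.
  rewrite E2; f_equal.
  replace b2 with (Cadd (Csub b2 b3) b3) by ring; replace b1 with (Cadd (Csub b1 b3) b3) by ring.
  rewrite F1, F2; auto.
Qed.

Lemma span_annihilated l x : (forall v, In v l -> A v = 0v) -> in_span X l x -> A x = 0v.
Proof.
  revert x; induction l as [|v l IH]; simpl; intros x Hl.
  - intros ->; apply lin_0; auto.
  - intros [a [w [Hw ->]]]; rewrite (proj1 LA), (proj2 LA), Hl, IH, vscal_0v, vadd_0; auto.
Qed.

Lemma compression_of_nilpotent_images x1 x2 : indep X (A x1 :: A x2 :: nil) ->
  A (A x1) = 0v -> A (A x2) = 0v -> good_compression X A.
Proof.
  intros Hi E1 E2.
  assert (Hker : forall v, In v (A x1 :: A x2 :: nil) -> A v = 0v)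
    by (intros v [<-|[<-|[]]]; auto).
  assert (Hi4 : indep X (x1 :: x2 :: A x1 :: A x2 :: nil)).
  { split; [|split; [|exact Hi]].
    - intros [a [w [Hw Ex]]]; apply (proj1 Hi); exists a, 0v; split; [simpl; auto|].
      rewrite Ex, (proj1 LA), (proj2 LA), (span_annihilated _ w Hker Hw), !vadd_0; auto.
    - intro Hs; apply (proj1 (proj2 Hi)); simpl.
      rewrite (span_annihilated _ x2 Hker Hs); auto. }
  destruct (interpolation X ((x1, C1) :: (x2, C0) :: (A x1, C1) :: (A x2, C0) :: nil) Hi4)
    as [h1 [Hh1 V1]].
  destruct (interpolation X ((x1, C0) :: (x2, C1) :: (A x1, C0) :: (A x2, C1) :: nil) Hi4)
    as [h2 [Hh2 V2]].
  exists x1, x2, h1, h2; do 2 (split; auto).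
  rewrite (V1 x1 C1), (V1 x2 C0), (V1 (A x1) C1), (V1 (A x2) C0), (V2 x1 C0), (V2 x2 C1),
    (V2 (A x1) C0), (V2 (A x2) C1) by (simpl; tauto).
  repeat split; auto; intro F; apply C1_neq0; rewrite <- F; ring.
Qed.

Lemma compression_of_scalar_images x1 x2 b : indep X (A x1 :: A x2 :: nil) -> b <> C0 ->
  A (A x1) = b *v A x1 -> A (A x2) = b *v A x2 -> good_compression X A.
Proof.
  intros Hi Hb E1 E2.
  destruct (interpolation X ((A x1, C1) :: (A x2, C0) :: nil) Hi) as [h1 [Hh1 V1]].
  destruct (interpolation X ((A x1, C0) :: (A x2, C1) :: nil) Hi) as [h2 [Hh2 V2]].
  exists (A x1), (A x2), h1, h2; do 2 (split; auto).
  rewrite E1, E2, (proj1 (proj2 Hh1)), (proj1 (proj2 Hh1)), (proj1 (proj2 Hh2)),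
    (proj1 (proj2 Hh2)), (V1 (A x1) C1), (V1 (A x2) C0), (V2 (A x1) C0), (V2 (A x2) C1)
    by (simpl; tauto).
  repeat split; auto; intro F; apply Hb.
  destruct (Cmul_eq0 b b); auto; rewrite <- F; ring.
Qed.

Lemma compression_of_rank_ge2 : op_nonzero X A -> ~ rank_le X 1 A -> good_compression X A.
Proof.
  intros Hnz Hr.
  destruct (classic (exists x, indep X (A (A x) :: A x :: x :: nil))) as [[x Hx]|N1];
    [eapply compression_of_cyclic3; eauto|].
  destruct (classic (exists x al be, indep X (A x :: x :: nil) /\ al <> C0 /\
    A (A x) = al *v x +v be *v A x)) as [[x [al [be [Hi [Hal E]]]]]|N2];
    [eapply compression_of_cyclic2; eauto|].
  assert (Hq : forall x, exists be, A (A x) = be *v A x)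
    by (intro x; destruct (orbit_trichotomy x) as [H|[H|H]]; auto; exfalso; eauto).
  destruct (independent_images Hnz Hr) as [x1 [x2 Hi]].
  destruct (common_eigenvalue x1 x2 Hq Hi) as [b [E1 E2]].
  destruct (classic (b = C0)) as [->|Hb].
  - rewrite vscal_0s in E1, E2; eapply compression_of_nilpotent_images; eauto.
  - eapply compression_of_scalar_images; eauto.
Qed.

End GoodCompression.

Lemma rank_one_sandwich_peripheral (X : CBanach) (A B : op X) (r s : nat) :
  dim_ge2 X -> bounded_op X A -> bounded_op X B -> rank_le X 1 A ->
  is_singleton (peripheral_spectrum X (op_comp X (op_pow X B r) (op_comp X A (op_pow X B s)))).
Proof.
  intros Hd HA HB [ys [Hlen Hys]]; destruct ys as [|y [|]]; try discriminate.
  apply (rank_le1_peripheral X _ (op_pow X B r y) Hd).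
  - apply comp_bounded; [|apply comp_bounded; auto]; apply pow_bounded; auto.
  - intro x; unfold op_comp; apply span1_map; [apply pow_bounded; auto | apply Hys].
Qed.

Lemma good_compression_test (X : CBanach) (A : op X) (r s : nat) :
  bounded_op X A -> (1 <= r + s)%nat -> good_compression X A ->
  exists B, bounded_op X B /\ rank_le X 2 B /\
    ~ is_singleton (peripheral_spectrum X
        (op_comp X (op_pow X B r) (op_comp X A (op_pow X B s)))).
Proof.
  intros HA Hrs [w1 [w2 [h1 [h2 [Hh1 [Hh2 [E11 [E12 [E21 [E22 [Hkap Hdel]]]]]]]]]]].
  destruct (Cpow_root_m1 _ Hrs) as [om Hom].
  exists (test_op X w1 w2 h1 h2 om); split; [|split].
  - apply test_op_bounded; auto.
  - apply test_op_rank2.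
  - apply (sandwich_not_singleton X A HA w1 w2 h1 h2); auto.
Qed.

Theorem lemma2p3 (X : CBanach) (Aalg : op X -> Prop) (r s : nat) (A : op X) :
  dim_ge2 X ->
  standard_operator_algebra X Aalg ->
  (1 <= r + s)%nat ->
  Aalg A ->
  op_nonzero X A ->
  (rank_one X A <->
     (forall B, Aalg B ->
        is_singleton (peripheral_spectrum X
          (op_comp X (op_pow X B r) (op_comp X A (op_pow X B s)))))) /\
  (rank_one X A <->
     (forall B, Aalg B -> rank_le X 2 B ->
        is_singleton (peripheral_spectrum X
          (op_comp X (op_pow X B r) (op_comp X A (op_pow X B s)))))).
Proof.
  intros Hd [Hbd [_ [_ [_ Hfin]]]] Hrs HAA Hnz.
  assert (HA : bounded_op X A) by auto.
  assert (Forward : rank_one X A -> forall B, Aalg B ->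
    is_singleton (peripheral_spectrum X
      (op_comp X (op_pow X B r) (op_comp X A (op_pow X B s)))))
    by (intros [H1 _] B HB; apply rank_one_sandwich_peripheral; auto).
  assert (Backward : (forall B, Aalg B -> rank_le X 2 B ->
    is_singleton (peripheral_spectrum X
      (op_comp X (op_pow X B r) (op_comp X A (op_pow X B s))))) -> rank_one X A).
  { intro Hall; split; auto; apply NNPP; intro Hr.
    destruct (good_compression_test X A r s HA Hrs (compression_of_rank_ge2 X A HA Hnz Hr))
      as [B [HB [HB2 Hns]]].
    apply Hns, Hall; auto; apply Hfin; split; eauto. }
  split; split; auto.
Qed.
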